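(* For every positive integer $q$, the simplicial complex $\mathbb{M}_q^2$, with vertex $\ell_{i,j}$ labeled by $\tau_i\tau_j$, supports the minimal free resolution of $\mathcal{T}_q^{\,2}$, where $\mathcal{T}_q$ is the permutation ideal.
   Context: $S_q$ is the symmetric group on $[q]$; for $\sigma=i_1\cdots i_q$ in one-line notation, $\sigma(j)=i_j$. $K$ is a field, $S_{\mathcal{T}}=K[x_\sigma:\sigma\in S_q]$, $\tau_i=\prod_{\sigma\in S_q}x_\sigma^{\sigma(i)}$, $\mathcal{T}_q=(\tau_1,\ldots,\tau_q)$. $\mathbb{M}_q^2$: vertex set $\{\ell_{i,j}:1\le i\le j\le q\}$, $\mathcal{M}=\{\ell_{i,j}:i<j\}$, facets $\mathcal{M}_k=\mathcal{M}\cup\{\ell_{k,k}\}$, $k\in[q]$. A labeled simplicial complex (faces labeled by lcm of vertex labels) supports a free resolution of the ideal generated by its vertex labels if the Bayer–Peeva–Sturmfels homogenization of its augmented simplicial chain complex (free basis element for each face $\tau$ in multidegree $m_\tau$, differential $\tau\mapsto\sum\pm(m_\tau/m_{\tau\setminus v})(\tau\setminus v)$) is exact, i.e. is a free resolution of that ideal. *)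

From HB Require Import structures.
From mathcomp Require Import all_boot all_order all_algebra all_fingroup.
From mathcomp Require Import mpoly.
Set Implicit Arguments. Unset Strict Implicit. Unset Printing Implicit Defensive.
Import GRing.Theory.
Local Open Scope ring_scope.

Section LabeledComplex.
Variables (K : fieldType) (n : nat) (V : finType).
Variable face : pred {set V}.
Variable lab : V -> 'X_{1..n}.

(* label of a face: lcm of the vertex labels (empty face gets label 1)          *)
Definition face_lab (t : {set V}) : 'X_{1..n} :=
  [multinom (\max_(v in t) lab v i)%N | i < n].

Definition bps_sign (t : {set V}) (v : V) : {mpoly K[n]} :=
  (-1) ^+ #|[set w in t | (enum_rank w < enum_rank v)%N]|.

(* chains of the homogenized augmented chain complex: free module with basis the
   faces; a chain in homological degree k (k = -1,0,1,...) is supported on faces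
   of cardinality k+1                                                         *)
Definition chain := {ffun {set V} -> {mpoly K[n]}}.
Definition supported (k : nat) (c : chain) : Prop :=
  forall t, c t != 0 -> face t /\ #|t| = k.

Definition bps_diff (c : chain) : chain :=
  [ffun s => \sum_(t : {set V} | face t) \sum_(v in t | s == t :\ v)
      bps_sign t v * 'X_[mnm_sub (face_lab t) (face_lab s)] * c t].

(* exactness of the homogenized augmented chain complex at every F_k, k >= 0
   (F_k is spanned by faces of cardinality k+1)                               *)
Definition bps_exact : Prop :=
  forall (k : nat) (c : chain), supported k.+1 c -> bps_diff c = 0 ->
    exists b : chain, supported k.+2 b /\ bps_diff b = c.

(* minimality: every differential maps into m F, m = (x_1,...,x_n) the maximal
   homogeneous ideal, i.e. all coefficients have zero constant term           *)
Definition bps_minimal : Prop :=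
  forall (c : chain) (s : {set V}), (bps_diff c s)@_(@mnm0 n) = 0.

(* the image of the augmentation F_0 -> F_{-1} = S                             *)
Definition bps_augm_image : {mpoly K[n]} -> Prop :=
  fun p => exists c : chain, supported 1 c /\ bps_diff c set0 = p.

End LabeledComplex.

Definition ideal_gen (R : comNzRingType) (I : finType) (g : I -> R) : R -> Prop :=
  fun p => exists c : I -> R, p = \sum_i c i * g i.
Definition ideal_mul (R : comNzRingType) (A B : R -> Prop) : R -> Prop :=
  fun p => exists s : seq (R * R),
    (forall ab, ab \in s -> A ab.1 /\ B ab.2) /\ p = \sum_(ab <- s) ab.1 * ab.2.

(* variables x_sigma, sigma in S_q, indexed through enum_rank                   *)
Definition nvars (q : nat) := #|{perm 'I_q}|.
(* exponent vector of tau_i = prod_sigma x_sigma^{sigma(i)} (1-based values)     *)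
Definition tau_mnm (q : nat) (i : 'I_q) : 'X_{1..nvars q} :=
  [multinom ((enum_val (j : 'I_#|{perm 'I_q}|) : {perm 'I_q}) i).+1 | j < nvars q].
Definition tau (K : fieldType) (q : nat) (i : 'I_q) : {mpoly K[nvars q]} :=
  'X_[tau_mnm i].
Definition perm_ideal (K : fieldType) (q : nat) : {mpoly K[nvars q]} -> Prop :=
  ideal_gen (@tau K q).

(* vertex l_{i,j} is the pair (i,j) with i <= j (0-based indices);
   M = {l_{i,j} : i < j}, facets M_k = M u {l_{k,k}}                            *)
Definition Mset (q : nat) : {set 'I_q * 'I_q} := [set p : 'I_q * 'I_q | (p.1 < p.2)%N].
Definition Mq2_face (q : nat) : pred {set 'I_q * 'I_q} :=
  fun t => [exists k : 'I_q, t \subset Mset q :|: [set (k, k)]].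
Definition Mq2_lab (q : nat) (p : 'I_q * 'I_q) : 'X_{1..nvars q} :=
  mnm_add (tau_mnm p.1) (tau_mnm p.2).

From HB Require Import structures.
From mathcomp Require Import all_boot all_order all_algebra all_fingroup.
From mathcomp Require Import mpoly.
From mathcomp Require Import zify ring.
Set Implicit Arguments. Unset Strict Implicit. Unset Printing Implicit Defensive.
Import GRing.Theory.
Local Open Scope ring_scope.

(* By the Bayer-Peeva-Sturmfels criterion, the multidegree-m strand of the
   homogenized complex is the augmented chain complex over K of the subcomplex
   of faces whose label divides x^m, so exactness amounts to the acyclicity of
   these subcomplexes.  For M_q^2 every nonempty one is a cone: an off-diagonal
   vertex l_{i,j} in it lies in every facet, hence is an apex; otherwise it has
   a single vertex l_{k,k}, since labels of l_{a,a} and l_{b,b} dividing x^m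
   force tau_a tau_b | x^m.  Minimality: given a vertex v of a face in M_k, a
   permutation sigma putting the indices of v on top (and k below q-1) gives
   x_sigma a larger exponent in the label of v than in any other label of the
   face.  The augmentation maps onto the ideal generated by the labels
   tau_i tau_j, which is T_q^2. *)

Section SimplicialChains.
Variables (R : comRingType) (V : finType) (face : pred {set V}).

Definition face_sign (t : {set V}) (v : V) : R :=
  (-1) ^+ #|[set w in t | (enum_rank w < enum_rank v)%N]|.

(* [boundary f s] is the coefficient of [s] in the boundary of the chain
   [sum_t f t * t]. *)
Definition boundary (f : {set V} -> R) (s : {set V}) : R :=
  \sum_(v | (v \notin s) && face (v |: s)) face_sign (v |: s) v * f (v |: s).

Definition cone_homotopy (u : V) (f : {set V} -> R) (t : {set V}) : R :=
  if u \in t then face_sign t u * f (t :\ u) else 0.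

Lemma face_sign_sqr (t : {set V}) (v : V) : face_sign t v * face_sign t v = 1.
Proof. by rewrite /face_sign -exprD addnn -mul2n exprM sqrrN !expr1n. Qed.

Lemma card_rank_lt_setU1 (x y : V) (B : {set V}) : x \notin B ->
  #|[set w in x |: B | (enum_rank w < enum_rank y)%N]| =
  ((enum_rank x < enum_rank y) + #|[set w in B | (enum_rank w < enum_rank y)%N]|)%N.
Proof.
move=> xB; case: ltnP => xy.
  have -> : [set w in x |: B | (enum_rank w < enum_rank y)%N] =
            x |: [set w in B | (enum_rank w < enum_rank y)%N].
    by apply/setP => w; rewrite !inE; case: eqVneq => [->|].
  by rewrite cardsU1 inE (negbTE xB).
apply: eq_card => w; rewrite !inE.
by case: eqVneq => [->|//]; rewrite ltnNge xy (negbTE xB).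
Qed.

Lemma face_sign_swap (s : {set V}) (u v : V) : u \in s -> v \notin s ->
  face_sign (v |: s) v * face_sign (v |: s) u =
  - (face_sign s u * face_sign (v |: (s :\ u)) v).
Proof.
move=> us vs; have uv : u != v by apply: contraNneq vs => <-.
rewrite -{1 2 3}(setD1K us); set A := s :\ u.
have uA : u \notin A by rewrite !inE eqxx.
have vA : v \notin A by rewrite !inE negb_and vs orbT.
have vuA : v \notin u |: A by rewrite !inE (negbTE vs) andbF orbF eq_sym.
have uvA : u \notin v |: A by rewrite !inE eqxx (negbTE uv).
rewrite /face_sign setUCA !card_rank_lt_setU1 // !ltnn.
have : enum_rank u != enum_rank v by rewrite (inj_eq enum_rank_inj).
by rewrite neq_ltn => /orP[] lt; rewrite lt ltnNge (ltnW lt) !exprD ?expr0 ?expr1; ring.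
Qed.

Lemma eq_boundary (f g : {set V} -> R) : f =1 g -> boundary f =1 boundary g.
Proof. by move=> fg s; apply: eq_bigr => v _; rewrite fg. Qed.

Section Cone.
Variables (u : V) (P : pred {set V}) (f : {set V} -> R).
Hypothesis face_coneU : forall t, face t -> P t -> face (u |: t).
Hypothesis f_supp : forall t, f t != 0 -> face t /\ P t.

Lemma boundary_cone_homotopy_notin (s : {set V}) : u \notin s ->
  boundary (cone_homotopy u f) s = f s.
Proof.
move=> us; rewrite /boundary big_mkcond (bigD1 u) //= big1 => [|v vu]; last first.
  by case: ifP => // _; rewrite /cone_homotopy !inE eq_sym (negbTE vu) (negbTE us) mulr0.
rewrite us addr0 /cone_homotopy setU11 setU1K // mulrA face_sign_sqr mul1r.
have [->|/f_supp[fs Ps]] := eqVneq (f s) 0; first by rewrite if_same.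
by rewrite face_coneU.
Qed.

Lemma boundary_cone_homotopy_mem (s : {set V}) : u \in s ->
  boundary (cone_homotopy u f) s + cone_homotopy u (boundary f) s = f s.
Proof.
move=> us; have s_uE : u |: (s :\ u) = s by exact: setD1K.
rewrite {2}/cone_homotopy us /boundary.
rewrite [X in face_sign s u * X]big_mkcond [X in face_sign s u * X](bigD1 u) //=.
rewrite !inE eqxx /= s_uE mulrDr addrCA.
have -> : face_sign s u * (if face s then face_sign s u * f s else 0) = f s.
  have [->|/f_supp[fs _]] := eqVneq (f s) 0; first by rewrite !(mulr0, if_same).
  by rewrite fs mulrA face_sign_sqr mul1r.
rewrite big_mkcond (bigD1 u) //= us add0r mulr_sumr -big_split big1 ?addr0 //= => v vu.
rewrite !inE vu /=; case: (boolP (v \in s)) => vs /=; first by rewrite mulr0 addr0.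
have vsuE : (v |: s) :\ u = v |: (s :\ u).
  by apply/setP => w; rewrite !inE; case: (eqVneq w v) => [->|]; rewrite ?vu.
rewrite /cone_homotopy !inE eq_sym (negbTE vu) us /= vsuE.
have [->|/f_supp[fA PA]] := eqVneq (f (v |: (s :\ u))) 0.
  by rewrite !(mulr0, if_same) addr0.
have fvs : face (v |: s) by rewrite -s_uE setUCA; apply: face_coneU.
by rewrite fvs fA mulrA face_sign_swap //; ring.
Qed.

Lemma boundary_cone_homotopy (s : {set V}) :
  boundary (cone_homotopy u f) s + cone_homotopy u (boundary f) s = f s.
Proof.
have [/boundary_cone_homotopy_mem //|us] := boolP (u \in s).
by rewrite boundary_cone_homotopy_notin // /cone_homotopy (negbTE us) addr0.
Qed.

End Cone.

End SimplicialChains.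

Section MonomialArithmetic.
Variables (K : fieldType) (n : nat).
Implicit Types (a b d e m : 'X_{1..n}) (p : {mpoly K[n]}).

Lemma mcoeffXM d e p : ('X_[d] * p)@_e = if (d <= e)%MM then p@_(e - d) else 0.
Proof.
case: ifP => de; first by rewrite mulrC -{1}(submK de) addmC mcoeffMX.
rewrite mulrC memN_msupp_eq0 // (perm_mem (msuppMX p d)).
by apply/mapP => -[m' _ em]; rewrite em lem_addr in de.
Qed.

Lemma mcoeff_signM k p e : ((-1) ^+ k * p)@_e = (-1) ^+ k * p@_e.
Proof. by rewrite -(rmorph_sign (@mpolyC n K)) mcoeffCM. Qed.

Lemma lem_sub2r a b m : (b <= a)%MM -> (b <= m)%MM -> (a - b <= m - b)%MM = (a <= m)%MM.
Proof.
move=> /mnm_lepP ba /mnm_lepP bm.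
by apply/mnm_lepP/mnm_lepP => h i; move: (h i) (ba i) (bm i); rewrite ?mnmBE; lia.
Qed.

Lemma subm_sub2r a b m : (b <= a)%MM -> (a <= m)%MM -> (m - b - (a - b) = m - a)%MM.
Proof.
move=> /mnm_lepP ba /mnm_lepP am.
by apply/mnmP => i; move: (ba i) (am i); rewrite !mnmBE; lia.
Qed.

End MonomialArithmetic.

Section Strands.
Variables (K : fieldType) (n : nat) (V : finType) (face : pred {set V}).
Variable lab : V -> 'X_{1..n}.
Local Notation L := (face_lab lab).
Local Notation chainT := (chain K n V).

Lemma lab_le_face_lab (t : {set V}) (v : V) : v \in t -> (lab v <= L t)%MM.
Proof. by move=> vt; apply/mnm_lepP => i; rewrite mnmE (leq_bigmax_cond (F := lab^~ i)). Qed.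

Lemma face_lab_leP (t : {set V}) (m : 'X_{1..n}) :
  reflect (forall v, v \in t -> (lab v <= m)%MM) (L t <= m)%MM.
Proof.
apply: (iffP idP) => [tm v /lab_le_face_lab vt|h]; first exact: lepm_trans vt tm.
by apply/mnm_lepP => i; rewrite mnmE; apply/bigmax_leqP => v /h/mnm_lepP.
Qed.

Lemma face_lab_subset (s t : {set V}) : s \subset t -> (L s <= L t)%MM.
Proof. by move=> st; apply/face_lab_leP => v /(subsetP st)/lab_le_face_lab. Qed.

Lemma face_lab_set0 : L set0 = 0%MM.
Proof. by apply/mnmP => i; rewrite !mnmE big_set0. Qed.

Lemma face_lab_set1 (v : V) : L [set v] = lab v.
Proof. by apply/mnmP => i; rewrite mnmE big_set1. Qed.

Lemma big_face_setD1 (M : zmodType) (F : {set V} -> V -> M) (s : {set V}) :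
  \sum_(t | face t) \sum_(v in t | s == t :\ v) F t v =
  \sum_(v | (v \notin s) && face (v |: s)) F (v |: s) v.
Proof.
rewrite (exchange_big_dep predT) //= [RHS]big_mkcond /=; apply: eq_bigr => v _.
have [vs|vs] /= := boolP (v \in s).
  by apply: big1 => t /andP[_ /andP[vt /eqP st]]; move: vs; rewrite st !inE eqxx.
rewrite big_mkcond (bigD1 (v |: s)) //= big1 ?addr0 => [|t tv].
  by rewrite setU11 setU1K // eqxx /= andbT.
case: ifP => // /andP[_ /andP[vt /eqP st]].
by move: tv; rewrite st setD1K // eqxx.
Qed.

Definition strand (c : chainT) (m : 'X_{1..n}) (t : {set V}) : K :=
  if (L t <= m)%MM then (c t)@_(m - L t) else 0.

Lemma strand_addm (c : chainT) (a : 'X_{1..n}) (t : {set V}) :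
  strand c (a + L t) t = (c t)@_a.
Proof. by rewrite /strand lem_addl addmK. Qed.

Lemma strand_inj (c c' : chainT) : (forall m t, strand c m t = strand c' m t) -> c = c'.
Proof.
move=> cc'; apply/ffunP => t; apply/mpolyP => a.
by rewrite -!(strand_addm _ a) cc'.
Qed.

Lemma chain_neq0_strand (c : chainT) (t : {set V}) :
  c t != 0 -> exists m, strand c m t != 0.
Proof.
rewrite -msupp_eq0; case E: (msupp (c t)) => [//|a s] _.
by exists (a + L t)%MM; rewrite strand_addm -mcoeff_msupp E mem_head.
Qed.

Lemma strand_bps_diff (c : chainT) (m : 'X_{1..n}) :
  strand (bps_diff face lab c) m =1 boundary face (strand c m).
Proof.
move=> s; rewrite /strand ffunE /boundary.
have sv v : (L s <= L (v |: s))%MM by apply: face_lab_subset; apply: subsetUr.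
case: ifP => sm; last first.
  apply/esym/big1 => v _; case: ifP => [vsm|_]; last by rewrite mulr0.
  by rewrite (lepm_trans (sv v) vsm) in sm.
rewrite raddf_sum; under eq_bigr do rewrite raddf_sum.
rewrite (big_face_setD1 (fun t v =>
  (bps_sign K n t v * 'X_[L t - L s] * c t)@_(m - L s))).
apply: eq_bigr => v _.
rewrite -mulrA mcoeff_signM mcoeffXM lem_sub2r //.
by case: ifP => vsm; rewrite ?mulr0 // subm_sub2r.
Qed.

Definition chain_mdegs (c : chainT) : seq 'X_{1..n} :=
  undup (flatten [seq [seq (a + L t)%MM | a <- msupp (c t)] | t <- enum {set V}]).

Lemma strand_neq0 (c : chainT) (m : 'X_{1..n}) (t : {set V}) :
  strand c m t != 0 -> (m \in chain_mdegs c) && (L t <= m)%MM.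
Proof.
rewrite /strand; case: ifP => [tm nz|_]; last by rewrite eqxx.
rewrite andbT mem_undup; apply/flattenP.
exists [seq (a + L t)%MM | a <- msupp (c t)]; first by apply: map_f; rewrite mem_enum.
by rewrite -(submK tm); apply: map_f; rewrite mcoeff_msupp.
Qed.

Definition chain_of_strands (S : seq 'X_{1..n}) (beta : 'X_{1..n} -> {set V} -> K) : chainT :=
  [ffun t => \sum_(m <- S) beta m t *: 'X_[m - L t]].

Lemma strand_chain_of_strands S beta : uniq S ->
  (forall m t, beta m t != 0 -> (m \in S) && (L t <= m)%MM) ->
  forall m t, strand (chain_of_strands S beta) m t = beta m t.
Proof.
move=> uS beta_supp m t; rewrite /strand ffunE.
have [tm|tm] := boolP (L t <= m)%MM; last first.
  by apply/esym/eqP; apply: contraNT tm => /beta_supp/andP[].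
rewrite raddf_sum /=; under eq_bigr do rewrite mcoeffZ mcoeffX.
have coef m' : beta m' t * ((m' - L t)%MM == (m - L t)%MM)%:R = beta m' t * (m' == m)%:R.
  have [->|/beta_supp/andP[_ tm']] := eqVneq (beta m' t) 0; first by rewrite !mul0r.
  congr (_ * (nat_of_bool _)%:R); apply/eqP/eqP => [e|->//].
  by rewrite -(submK tm) -(submK tm') e.
under eq_bigr do rewrite coef.
have [mS|mS] := boolP (m \in S).
  rewrite (bigD1_seq m) //= eqxx mulr1 big1 ?addr0 // => m' /negbTE->.
  by rewrite mulr0.
rewrite big1_seq => [|m' /andP[_ m'S]]; last first.
  by have [e|_] := eqVneq m' m; [move: mS; rewrite -e m'S | rewrite /= mulr0].
by apply/esym/eqP; apply: contraNT mS => /beta_supp/andP[].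
Qed.

Definition cone_apexb (m : 'X_{1..n}) (u : V) : bool :=
  (lab u <= m)%MM && [forall t, face t && (L t <= m)%MM ==> face (u |: t)].

Definition cone_filler (c : chainT) (m : 'X_{1..n}) : {set V} -> K :=
  if [pick u | cone_apexb m u] is Some u then cone_homotopy u (strand c m)
  else fun=> 0.

Section Exactness.
Hypothesis cone_apex_exists : forall m t, face t -> t != set0 -> (L t <= m)%MM ->
  exists u, cone_apexb m u.
Variables (k : nat) (c : chainT).
Hypotheses (c_supp : supported face k.+1 c) (c_cycle : bps_diff face lab c = 0).

Lemma strand_supp m t : strand c m t != 0 -> face t /\ #|t| = k.+1.
Proof.
move=> nz; apply: c_supp; apply: contraNneq nz => ct0.
by rewrite /strand ct0 mcoeff0 if_same.
Qed.

Lemma boundary_cone_filler m : boundary face (cone_filler c m) =1 strand c m.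
Proof.
rewrite /cone_filler; case: pickP => [u /andP[um /forallP u_apex]|no_apex] s.
  rewrite -[RHS](boundary_cone_homotopy (face := face) (u := u)
                   (P := fun t => L t <= m)%MM) => [||t].
  - suff -> : cone_homotopy u (boundary face (strand c m)) s = 0 by rewrite addr0.
    rewrite /cone_homotopy -strand_bps_diff c_cycle.
    by case: ifP => // _; rewrite /strand ffunE mcoeff0 !if_same mulr0.
  - by move=> t ft tm; have := u_apex t; rewrite ft tm.
  - by move=> nz; have [ft _] := strand_supp nz; have /andP[_ ->] := strand_neq0 nz.
rewrite /boundary big1 => [|v _]; last by rewrite mulr0.
apply/esym/eqP; apply: contraT => nz; have [ft ct] := strand_supp nz.
have /andP[_ tm] := strand_neq0 nz.
have s_neq0 : s != set0 by rewrite -card_gt0 ct.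
have [u apex] := cone_apex_exists ft s_neq0 tm.
by have := no_apex u; rewrite apex.
Qed.

Lemma cone_filler_supp m t : cone_filler c m t != 0 ->
  [/\ (m \in chain_mdegs c) && (L t <= m)%MM, face t & #|t| = k.+2].
Proof.
rewrite /cone_filler; case: pickP => [u /andP[um /forallP u_apex]|_]; last by rewrite eqxx.
rewrite /cone_homotopy; case: ifP => [ut|_]; last by rewrite eqxx.
have [->|nz _] := eqVneq (strand c m (t :\ u)) 0; first by rewrite mulr0 eqxx.
have /andP[mS tum] := strand_neq0 nz; have [ft ct] := strand_supp nz.
split; last by rewrite (cardsD1 u t) ut ct.
- rewrite mS; apply/face_lab_leP => w wt; have [->//|wu] := eqVneq w u.
  by apply: (elimT (face_lab_leP _ _) tum); rewrite !inE wu.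
- by have := u_apex (t :\ u); rewrite ft tum setD1K.
Qed.

End Exactness.

Lemma bps_exact_of_cone_apex :
  (forall m t, face t -> t != set0 -> (L t <= m)%MM -> exists u, cone_apexb m u) ->
  bps_exact K face lab.
Proof.
move=> cone_apex_exists k c c_supp c_cycle.
pose b := chain_of_strands (chain_mdegs c) (cone_filler c).
have strand_b m t : strand b m t = cone_filler c m t.
  apply: strand_chain_of_strands (undup_uniq _) _ m t => m' t' nz.
  by case: (cone_filler_supp c_supp nz).
exists b; split.
  move=> t /chain_neq0_strand[m]; rewrite strand_b.
  by case/(cone_filler_supp c_supp).
apply: strand_inj => m t.
rewrite strand_bps_diff (eq_boundary face (strand_b m)).
exact: (boundary_cone_filler cone_apex_exists c_supp c_cycle).
Qed.

Lemma bps_minimal_of_lab_not_le :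
  (forall t v, face t -> v \in t -> ~~ (lab v <= L (t :\ v))%MM) ->
  bps_minimal K face lab.
Proof.
move=> lab_not_le c s; rewrite ffunE raddf_sum big1 // => t ft.
rewrite raddf_sum big1 // => v /andP[vt /eqP st].
rewrite /= -mulrA /bps_sign mcoeff_signM mcoeffXM; case: ifP => [ts0|_]; last by rewrite mulr0.
have /negP[] := lab_not_le t v ft vt; rewrite -st.
apply: lepm_trans (lab_le_face_lab vt) _; apply/mnm_lepP => i.
by move/mnm_lepP/(_ i): ts0; rewrite mnmBE mnm0E leqn0 subn_eq0.
Qed.

Lemma bps_diff_set0 (c : chainT) :
  bps_diff face lab c set0 = \sum_(v | face [set v]) 'X_[lab v] * c [set v].
Proof.
rewrite ffunE (big_face_setD1 (fun t v => bps_sign K n t v * 'X_[L t - L set0] * c t)).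
apply: eq_big => [v|v _]; first by rewrite inE setU0.
rewrite setU0 face_lab_set1 face_lab_set0 subm0 /bps_sign.
have -> : [set w in [set v] | (enum_rank w < enum_rank v)%N] = set0.
  by apply/setP => w; rewrite !inE; case: eqP => [->|]; rewrite ?ltnn.
by rewrite cards0 expr0 mul1r.
Qed.

End Strands.

Section PermutationComplex.
Variable q : nat.
Local Notation V := ('I_q * 'I_q)%type.
Local Notation face := (@Mq2_face q).
Local Notation lab := (@Mq2_lab q).
Local Notation L := (face_lab lab).

Lemma Mq2_labE (w : V) (s : {perm 'I_q}) :
  lab w (enum_rank s) = ((s w.1).+1 + (s w.2).+1)%N.
Proof. by rewrite /Mq2_lab mnmE /tau_mnm !mnmE enum_rankK. Qed.

Lemma Mq2_faceP (t : {set V}) :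
  reflect (exists k : 'I_q, forall w, w \in t -> (w.1 < w.2)%N \/ w = (k, k)) (face t).
Proof.
apply: (iffP existsP) => -[k tk]; exists k.
  by move=> w /(subsetP tk); rewrite !inE => /orP[|/eqP]; [left|right].
by apply/subsetP => w /tk; rewrite !inE => -[->|->]; rewrite ?eqxx ?orbT.
Qed.

Lemma Mq2_face_setU1 (t : {set V}) (w : V) : (w.1 < w.2)%N -> face t -> face (w |: t).
Proof.
move=> w12 /Mq2_faceP[k tk]; apply/Mq2_faceP; exists k => x.
by rewrite in_setU1 => /predU1P[->|/tk]; [left|].
Qed.

Lemma Mq2_lab_offdiag (a b : 'I_q) (m : 'X_{1..nvars q}) :
  (lab (a, a) <= m)%MM -> (lab (b, b) <= m)%MM -> (lab (a, b) <= m)%MM.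
Proof.
move=> /mnm_lepP am /mnm_lepP bm; apply/mnm_lepP => i.
by move: (am i) (bm i); rewrite /Mq2_lab !mnmE /=; lia.
Qed.

Lemma Mq2_cone_apex (m : 'X_{1..nvars q}) (t : {set V}) :
  face t -> t != set0 -> (L t <= m)%MM -> exists u, cone_apexb face lab m u.
Proof.
move=> ft /set0Pn[v vt] tm.
have [/existsP[w /andP[w12 wm]]|/existsPn no_offdiag] :=
  boolP [exists w : V, (w.1 < w.2)%N && (lab w <= m)%MM].
  exists w; rewrite /cone_apexb wm; apply/forallP => t'; apply/implyP => /andP[ft' _].
  exact: Mq2_face_setU1.
have offdiag_not_le (x : V) : (x.1 < x.2)%N -> ~~ (lab x <= m)%MM.
  by move=> x12; have := no_offdiag x; rewrite x12.
have face_diag t' : face t' -> (L t' <= m)%MM -> exists k, forall x : V, x \in t' -> x = (k, k).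
  move=> /Mq2_faceP[k t'k] /face_lab_leP t'm; exists k => x xt'.
  by case: (t'k x xt') => // /offdiag_not_le; rewrite (t'm x xt').
have diag_eq (a b : 'I_q) : (lab (a, a) <= m)%MM -> (lab (b, b) <= m)%MM -> a = b.
  move=> am bm; apply/val_inj; case: (ltngtP a b) => [ab|ba|//].
    by move: (offdiag_not_le (a, b) ab); rewrite (Mq2_lab_offdiag am bm).
  by move: (offdiag_not_le (b, a) ba); rewrite (Mq2_lab_offdiag bm am).
have [k tk] := face_diag t ft tm.
have vm := elimT (face_lab_leP _ _ _) tm v vt.
exists v; rewrite /cone_apexb vm; apply/forallP => t'; apply/implyP => /andP[ft' t'm].
have [k' t'k'] := face_diag t' ft' t'm.
apply/Mq2_faceP; exists k => x; rewrite in_setU1 => /predU1P[->|xt']; right; first exact: tk.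
have xm := elimT (face_lab_leP _ _ _) t'm x xt'.
rewrite (t'k' x xt') in xm *; rewrite (tk v vt) in vm.
by rewrite (diag_eq k' k xm vm).
Qed.

Lemma perm_top (k : 'I_q) : exists s : {perm 'I_q}, (s k : nat) = q.-1.
Proof.
have top_lt : (q.-1 < q)%N by case: k => k' /=; lia.
by exists (tperm k (Ordinal top_lt)); rewrite tpermL.
Qed.

Lemma perm_top2 (x y : 'I_q) : x != y ->
  exists s : {perm 'I_q}, (s y : nat) = q.-1 /\ (s x : nat) = q.-2.
Proof.
move=> xy; have q_gt1 : (1 < q)%N.
  by case: x y xy => [x ?] [y ?]; rewrite -(inj_eq val_inj) /=; lia.
have top_lt : (q.-1 < q)%N by lia.
have sec_lt : (q.-2 < q)%N by lia.
pose ty := tperm y (Ordinal top_lt).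
exists (ty * tperm (ty x) (Ordinal sec_lt))%g; rewrite !permM tpermL; split; last first.
  by rewrite tpermL.
rewrite tpermD //; last by rewrite -(inj_eq val_inj) /=; lia.
by rewrite -[Ordinal top_lt](tpermL y) (inj_eq perm_inj).
Qed.

Lemma perm_top_pair (i j k : 'I_q) : i != j ->
  exists s : {perm 'I_q}, (s i + s j = q.-2 + q.-1)%N /\ (s k : nat) != q.-1.
Proof.
move=> ij; have ne_top (s : {perm 'I_q}) a b : a != b -> (s b : nat) = q.-1 -> (s a : nat) != q.-1.
  by move=> ab <-; rewrite (inj_eq val_inj) (inj_eq perm_inj).
have [->|kj] := eqVneq k j.
  have ji : j != i by rewrite eq_sym.
  have [s [si sj]] := perm_top2 ji.
  by exists s; rewrite (ne_top s j i ji si) si sj addnC.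
have [s [sj si]] := perm_top2 ij.
by exists s; rewrite (ne_top s k j kj sj) si sj.
Qed.

Lemma perm_offdiag_sum_lt (s : {perm 'I_q}) (w v : V) :
  (w.1 < w.2)%N -> (v.1 < v.2)%N -> w != v -> (s v.1 + s v.2 = q.-2 + q.-1)%N ->
  (s w.1 + s w.2 < q.-2 + q.-1)%N.
Proof.
move=> w12 v12 wv sv; rewrite ltnNge; apply: contra wv => sw.
have inj (a b : 'I_q) : (s a : nat) = s b -> a = b by move/val_inj/perm_inj.
have ne (a b : 'I_q) : (a < b)%N -> (s a : nat) != s b.
  by move=> ab; rewrite (inj_eq val_inj) (inj_eq perm_inj) neq_ltn ab.
have [[e1 e2]|[e1 e2]] : (s w.1 : nat) = s v.1 /\ (s w.2 : nat) = s v.2 \/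
    (s w.1 : nat) = s v.2 /\ (s w.2 : nat) = s v.1.
  move: (ne _ _ w12) (ne _ _ v12) (ltn_ord (s w.1)) (ltn_ord (s w.2)).
  move: (ltn_ord (s v.1)) (ltn_ord (s v.2)) sv sw.
  by move: (s w.1 : nat) (s w.2 : nat) (s v.1 : nat) (s v.2 : nat) => a b c d; lia.
by rewrite [w]surjective_pairing [v]surjective_pairing (inj _ _ e1) (inj _ _ e2).
by move: w12 v12; rewrite (inj _ _ e1) (inj _ _ e2); lia.
Qed.

Lemma Mq2_separating_perm (t : {set V}) (v : V) : face t -> v \in t ->
  exists s : {perm 'I_q}, forall w, w \in t -> w != v -> (s w.1 + s w.2 < s v.1 + s v.2)%N.
Proof.
move=> /Mq2_faceP[k tk] vt; have [v12|->] := tk v vt.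
  have v1v2 : v.1 != v.2 by rewrite -(inj_eq val_inj) neq_ltn v12.
  have [s [sv sk]] := perm_top_pair k v1v2.
  exists s => w wt wv; rewrite sv; have [w12|->] := tk w wt.
    exact: perm_offdiag_sum_lt w12 v12 wv sv.
  by move: sk (ltn_ord (s k)) => /=; lia.
have [s sk] := perm_top k; exists s => w wt wk /=; rewrite sk.
have [w12|wkk] := tk w wt; last by rewrite wkk eqxx in wk.
have : (s w.1 : nat) != s w.2 by rewrite (inj_eq val_inj) (inj_eq perm_inj) neq_ltn w12.
by move: (ltn_ord (s w.1)) (ltn_ord (s w.2)); move: (s w.1 : nat) (s w.2 : nat) => a b; lia.
Qed.

Lemma Mq2_lab_not_le (t : {set V}) (v : V) : face t -> v \in t ->
  ~~ (lab v <= L (t :\ v))%MM.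
Proof.
move=> ft vt; have [s sep] := Mq2_separating_perm ft vt.
apply/negP => /mnm_lepP/(_ (enum_rank s)); rewrite Mq2_labE mnmE; apply/negP.
rewrite -ltnNge; apply: (@leq_ltn_trans (s v.1 + s v.2).+1); last by rewrite addSn addnS.
apply/bigmax_leqP => w; rewrite !inE Mq2_labE => /andP[wv wt].
by rewrite addSn addnS ltnS; exact: sep.
Qed.

End PermutationComplex.

Section IdealGenerators.
Variables (R : comNzRingType) (I : finType) (g : I -> R).

Lemma ideal_gen0 : ideal_gen g 0.
Proof. by exists (fun=> 0); rewrite big1 // => i _; rewrite mul0r. Qed.

Lemma ideal_genD p1 p2 : ideal_gen g p1 -> ideal_gen g p2 -> ideal_gen g (p1 + p2).
Proof.
move=> [c1 ->] [c2 ->]; exists (fun i => c1 i + c2 i).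
by rewrite -big_split; apply: eq_bigr => i _; rewrite mulrDl.
Qed.

Lemma ideal_genM (r : R) (i : I) : ideal_gen g (r * g i).
Proof.
exists (fun j => if j == i then r else 0).
by rewrite (bigD1 i) //= eqxx big1 ?addr0 // => j /negbTE->; rewrite mul0r.
Qed.

End IdealGenerators.

Lemma ideal_mul_gen (R : comNzRingType) (I J : finType) (g : I -> R) (h : J -> R) (p : R) :
  ideal_mul (ideal_gen g) (ideal_gen h) p <->
  ideal_gen (fun ij : I * J => g ij.1 * h ij.2) p.
Proof.
split=> [[s [s_gen ->]]|[c ->]].
  rewrite big_seq; apply: big_ind => [|p1 p2|ab /s_gen[[a ->] [b ->]]].
  - exact: ideal_gen0.
  - exact: ideal_genD.
  - exists (fun ij => a ij.1 * b ij.2); rewrite big_distrlr pair_big /=.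
    by apply: eq_bigr => ij _; rewrite mulrACA.
exists [seq (c ij * g ij.1, h ij.2) | ij <- enum {: I * J}]; split.
  move=> ab /mapP[ij _ ->] /=; split; first exact: ideal_genM.
  by rewrite -[h _]mul1r; apply: ideal_genM.
by rewrite big_map big_enum /=; apply: eq_bigr => ij _; rewrite mulrA.
Qed.

Section AugmentationImage.
Variables (K : fieldType) (q : nat).
Local Notation V := ('I_q * 'I_q)%type.
Local Notation face := (@Mq2_face q).
Local Notation lab := (@Mq2_lab q).

Definition sort_pair (ij : V) : V := if (ij.1 <= ij.2)%N then ij else (ij.2, ij.1).

Lemma Mq2_face_sort_pair (ij : V) : face [set sort_pair ij].
Proof.
apply/Mq2_faceP; exists ij.1 => w; rewrite inE => /eqP ->; rewrite /sort_pair.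
case: (leqP ij.1 ij.2) => [|lt] /=; last by left.
rewrite leq_eqVlt => /orP[/eqP/val_inj e|lt]; last by left.
by right; rewrite {2}e -surjective_pairing.
Qed.

Lemma Mq2_XlabE (ij : V) : 'X_[lab ij] = tau K ij.1 * tau K ij.2.
Proof. exact: mpolyXD. Qed.

Lemma Mq2_lab_sort_pair (ij : V) : lab (sort_pair ij) = lab ij.
Proof. by rewrite /sort_pair; case: ifP => //= _; rewrite /Mq2_lab addmC. Qed.

Lemma Mq2_augm_image (p : {mpoly K[nvars q]}) :
  @bps_augm_image K _ _ face lab p <-> ideal_gen (fun ij : V => tau K ij.1 * tau K ij.2) p.
Proof.
split=> [[c [_ <-]]|[d ->]].
  exists (fun v => if face [set v] then c [set v] else 0).
  rewrite bps_diff_set0 big_mkcond; apply: eq_bigr => v _.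
  by case: ifP => _; rewrite ?mul0r // mulrC Mq2_XlabE.
exists [ffun t => \sum_(ij | t == [set sort_pair ij]) d ij]; split.
  move=> t; rewrite ffunE; case: (pickP (fun ij => t == [set sort_pair ij])) => [ij /eqP->|none].
    by rewrite cards1 Mq2_face_sort_pair.
  by rewrite big_pred0 ?eqxx.
rewrite bps_diff_set0 [RHS](partition_big sort_pair (fun v => face [set v])) => [|ij _].
  apply: eq_bigr => v _; rewrite ffunE mulr_sumr; apply: eq_big => [ij|ij /eqP/set1_inj ->].
    by rewrite (inj_eq set1_inj) eq_sym.
  by rewrite Mq2_lab_sort_pair Mq2_XlabE mulrC.
exact: Mq2_face_sort_pair.
Qed.

End AugmentationImage.

Theorem corollary4p9 (K : fieldType) (q : nat) (hq : (0 < q)%N) :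
  @bps_exact K (nvars q) _ (@Mq2_face q) (@Mq2_lab q) /\
  @bps_minimal K (nvars q) _ (@Mq2_face q) (@Mq2_lab q) /\
  (forall p : {mpoly K[nvars q]},
     @bps_augm_image K (nvars q) _ (@Mq2_face q) (@Mq2_lab q) p <->
     ideal_mul (@perm_ideal K q) (@perm_ideal K q) p).
Proof.
split; first exact/bps_exact_of_cone_apex/Mq2_cone_apex.
split; first exact/bps_minimal_of_lab_not_le/Mq2_lab_not_le.
by move=> p; rewrite Mq2_augm_image ideal_mul_gen.
Qed.
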